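(* Let $\mathbf{X}=\mathbf{D}_1\boldsymbol{\Gamma}_1$ with $\boldsymbol{\Gamma}_1\neq 0$, and $\mathbf{Y}=\mathbf{X}+\mathbf{E}$ with $\|\mathbf{E}\|_{2,\infty}^{p}\le\epsilon_0$. Let $|\Gamma_1^{\min}|$ and $|\Gamma_1^{\max}|$ be the smallest and largest absolute values of the nonzero entries of $\boldsymbol{\Gamma}_1$. Let $\hat{\boldsymbol{\Gamma}}_1=\mathcal{S}_{\beta_1}(\mathbf{D}_1^T\mathbf{Y})$. Assume (a) $\|\boldsymbol{\Gamma}_1\|_{0,\infty}^{s}<\tfrac12\Big(1+\tfrac{1}{\mu(\mathbf{D}_1)}\tfrac{|\Gamma_1^{\min}|}{|\Gamma_1^{\max}|}\Big)-\tfrac{1}{\mu(\mathbf{D}_1)}\tfrac{\epsilon_0}{|\Gamma_1^{\max}|}$; and (b) $|\Gamma_1^{\min}|-(\|\boldsymbol{\Gamma}_1\|_{0,\infty}^{s}-1)\mu(\mathbf{D}_1)|\Gamma_1^{\max}|-\epsilon_0>\beta_1>\|\boldsymbol{\Gamma}_1\|_{0,\infty}^{s}\mu(\mathbf{D}_1)|\Gamma_1^{\max}|+\epsilon_0$. Then (1) the support of $\hat{\boldsymbol{\Gamma}}_1$ equals that of $\boldsymbol{\Gamma}_1$; and (2) $\|\boldsymbol{\Gamma}_1-\hat{\boldsymbol{\Gamma}}_1\|_{2,\infty}^{p}\le\sqrt{\|\boldsymbol{\Gamma}_1\|_{0,\infty}^{p}}\,\big(\epsilon_0+\mu(\mathb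f{D}_1)(\|\boldsymbol{\Gamma}_1\|_{0,\infty}^{s}-1)|\Gamma_1^{\max}|+\beta_1\big)$.
   Context: Setting. Signals are one-dimensional of length $N$ with periodic boundary conditions; $m_0=1$, $\boldsymbol{\Gamma}_0=\mathbf{X}$. For $i\ge1$, $\boldsymbol{\Gamma}_i\in\mathbb{R}^{Nm_i}$ has entry $km_i+r$ equal to the coefficient of filter $r$ at spatial shift $k$. $\mathbf{D}_i\in\mathbb{R}^{Nm_{i-1}\times Nm_i}$ is a (stride) convolutional dictionary whose column $km_i+r$ is local filter $r$ (length $n_{i-1}m_{i-1}$) placed cyclically on entries $km_{i-1},\dots,km_{i-1}+n_{i-1}m_{i-1}-1$, zero elsewhere; $\mathbf{D}_1\in\mathbb{R}^{N\times Nm_1}$ consists of all cyclic shifts of $m_1$ filters of length $n_0$. Columns have unit $\ell_2$ norm; $\mu(\mathbf{D})=\max_{i\neq j}|\mathbf{d}_i^T\mathbf{d}_j|$. Stripes: $\mathbf{S}_{i,j}\boldsymbol{\Gamma}_i$ is the subvector of $\boldsymbol{\Gamma}_i$ at spatial shifts $k\in\{j-n_{i-1}+1,\dots,j+n_{i-1}-1\}$ (mod $N$), all channels; $\|\boldsymbol{\Gamma}_i\|_{0,\infty}^{s}=\max_j\|\mathbf{S}_{i,j}\boldsymbol{\Gamma}_i\|_0$. Patches: for $i\ge0$, $\mathbf{P}_{i,j}\mathbf{V}$ extracts from $\mathbf{V}\in\mathbb{R}^{Nm_i}$ the cyclically contiguous subvector at spatial shifts $j,\dots,j+n_i-1$,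 all channels (length $n_im_i$); $\|\mathbf{V}\|_{2,\infty}^{p}=\max_j\|\mathbf{P}_{i,j}\mathbf{V}\|_2$, $\|\mathbf{V}\|_{0,\infty}^{p}=\max_j\|\mathbf{P}_{i,j}\mathbf{V}\|_0$. Soft thresholding: $\mathcal{S}_\beta$ acts entrywise, $\mathcal{S}_\beta(z)=z+\beta$ if $z<-\beta$, $0$ if $|z|\le\beta$, $z-\beta$ if $z>\beta$. *)

From HB Require Import structures.
From mathcomp Require Import all_boot all_order all_algebra.
Unset Printing Implicit Defensive.
Import Order.TTheory GRing.Theory Num.Theory Num.Def.
Local Open Scope ring_scope.

Section Defs.
Context {R : rcfType}.

Definition cv_at {len : nat} (V : 'cV[R]_len) (i : nat) : R :=
  if insub i is Some i' then V i' 0 else 0.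

Definition mx_at {a b : nat} (A : 'M[R]_(a, b)) (r t : nat) : R :=
  match insub r, insub t with Some r', Some t' => A r' t' | _, _ => 0 end.

(* D_1 in R^{N x N m}: column k*m+r is filter r (row r of f, length n0)
   placed cyclically on entries k, ..., k+n0-1 (mod N), zero elsewhere. *)
Definition conv_dict (N : nat) {m n0 : nat} (f : 'M[R]_(m, n0)) : 'M[R]_(N, N * m) :=
  \matrix_(p < N, i < N * m)
    (let k := (i %/ m)%N in let r := (i %% m)%N in
     let d := ((p + N - k) %% N)%N in
     if (d < n0)%N then mx_at f r d else 0).

Definition coherence {a b : nat} (D : 'M[R]_(a, b)) : R :=
  \big[maxr/0]_(i < b) \big[maxr/0]_(j < b | j != i) `|(D^T *m D) i j|.

(* stripe l0,inf norm: Gamma in R^{N m}, stripes of half-width n (spatial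
   shifts j-n+1 .. j+n-1 mod N, all channels) *)
Definition in_stripe (N n k j : nat) : bool :=
  let d := ((k + N - j) %% N)%N in (d < n)%N || (N - d < n)%N.

Definition stripe_l0inf (N m n : nat) (G : 'cV[R]_(N * m)) : nat :=
  \max_(j < N) #|[set i : 'I_(N * m) | (G i ord0 != 0%R) && in_stripe N n (i %/ m) j]|.

Definition patch_entry (N m : nat) {len : nat} (V : 'cV[R]_len) (j t r : nat) : R :=
  cv_at V (((j + t) %% N) * m + r)%N.

Definition patch_l2inf (N m n : nat) {len : nat} (V : 'cV[R]_len) : R :=
  \big[maxr/0]_(j < N)
     Num.sqrt (\sum_(t < n) \sum_(r < m) (patch_entry N m V j t r) ^+ 2).

Definition patch_l0inf (N m n : nat) {len : nat} (V : 'cV[R]_len) : nat :=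
  \max_(j < N) \sum_(t < n) \sum_(r < m) (patch_entry N m V j t r != 0%R : nat).

Definition soft (b z : R) : R :=
  if z < - b then z + b else if b < z then z - b else 0.

Definition absmax {len : nat} (G : 'cV[R]_len) : R :=
  \big[maxr/0]_(i < len) `|G i 0|.
Definition absmin {len : nat} (G : 'cV[R]_len) : R :=
  \big[minr/absmax G]_(i < len | G i 0 != 0) `|G i 0|.

End Defs.

From HB Require Import structures.
From mathcomp Require Import all_boot all_order all_algebra.
From mathcomp Require Import zify ring lra.
Import Order.TTheory GRing.Theory Num.Theory Num.Def.
Local Open Scope ring_scope.

(* Since the columns of D1 have unit norm, the i-th entry of D1^T Y is
   Gamma_i + (interference of the other atoms) + (noise).  Two atoms interact
   only when their spatial shifts lie in a common stripe, so the interference is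
   at most (number of other nonzero atoms of the stripe) * mu * |Gamma^max|, and
   the noise term <d_i, E> is at most the energy of E on the support of d_i,
   i.e. at most eps0 (Cauchy-Schwarz).  Condition (b) places beta1 strictly
   between the largest possible off-support value and the smallest possible
   on-support value of |D1^T Y|, so soft thresholding keeps exactly the support;
   each kept entry is then off by at most the estimation error plus beta1, and
   summing the squares over a patch gives the l2,inf bound. *)

Lemma cyclic_subE (N x y : nat) : (x < N)%N -> (y < N)%N ->
  ((x + N - y) %% N = if (y <= x)%N then x - y else x + N - y)%N.
Proof.
move=> xN yN; case: leqP => yx.
  have -> : (x + N - y = (x - y) + N)%N by lia.
  by rewrite modnDr modn_small //; lia.
by rewrite modn_small //; lia.
Qed.

Lemma cyclic_addE (N x y : nat) : (x < N)%N -> (y < N)%N ->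
  ((x + y) %% N = if (x + y < N)%N then x + y else x + y - N)%N.
Proof.
move=> xN yN; case: ltnP => h; first by rewrite modn_small.
have -> : (x + y = (x + y - N) + N)%N by lia.
by rewrite modnDr modn_small //; lia.
Qed.

Lemma cyclic_addK (N k u : nat) : (k < N)%N -> (u < N)%N ->
  (((k + u) %% N + N - k) %% N = u)%N.
Proof.
move=> kN uN; have qN : ((k + u) %% N < N)%N by rewrite ltn_pmod //; lia.
by rewrite cyclic_subE // cyclic_addE //; case: ltnP => h; case: leqP; lia.
Qed.

(* [(p + N - a) %% N < n] says that p lies in the cyclic window of length n
   starting at a. *)
Lemma in_stripe_common_window {N n a b p : nat} :
  (a < N)%N -> (b < N)%N -> (p < N)%N ->
  ((p + N - a) %% N < n)%N -> ((p + N - b) %% N < n)%N -> in_stripe N n b a.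
Proof.
move=> aN bN pN; rewrite /in_stripe !cyclic_subE //.
by case: (leqP a p); case: (leqP b p); case: (leqP a b); lia.
Qed.

Lemma in_stripe_refl (N n a : nat) : (0 < n)%N -> (a < N)%N -> in_stripe N n a a.
Proof. by move=> n_gt0 aN; rewrite /in_stripe cyclic_subE // leqnn subnn n_gt0. Qed.

Section RealClosedField.
Context {R : rcfType}.

Lemma sqr_sum_mul_le_unit n (a b : 'I_n -> R) : \sum_i a i ^+ 2 = 1 ->
  (\sum_i a i * b i) ^+ 2 <= \sum_i b i ^+ 2.
Proof.
move=> a_unit; set t := \sum_i a i * b i.
have proj_ge0 : 0 <= \sum_i (b i - t * a i) ^+ 2.
  by apply: sumr_ge0 => i _; exact: sqr_ge0.
have expand : \sum_i (b i - t * a i) ^+ 2 = \sum_i b i ^+ 2 - t ^+ 2.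
  rewrite (eq_bigr (fun i => b i ^+ 2 - (2 * t) * (a i * b i) + t ^+ 2 * a i ^+ 2));
    last by move=> i _; ring.
  by rewrite !big_split /= sumrN -!mulr_sumr a_unit -/t; ring.
lra.
Qed.

Lemma cv_atE {len : nat} (V : 'cV[R]_len) (i : 'I_len) : cv_at V i = V i 0.
Proof. by rewrite /cv_at valK. Qed.

Lemma absmax_ge {len : nat} (G : 'cV[R]_len) (j : 'I_len) : `|G j 0| <= absmax G.
Proof. exact: (le_bigmax_cond _ _ (j := j) isT). Qed.

Lemma absmax_ge0 {len : nat} (G : 'cV[R]_len) : 0 <= absmax G.
Proof. exact: bigmax_ge_id. Qed.

Lemma absmin_le {len : nat} (G : 'cV[R]_len) (j : 'I_len) :
  G j 0 != 0 -> absmin G <= `|G j 0|.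
Proof. by move=> Gj; exact: (bigmin_le_cond _ _ (j := j) Gj). Qed.

Lemma soft_dist (b z : R) : 0 <= b -> `|z - soft b z| <= b.
Proof.
move=> b_ge0; rewrite /soft; case: ltP => h1.
  have -> : z - (z + b) = - b by ring.
  by rewrite normrN ger0_norm.
case: ltP => h2.
  have -> : z - (z - b) = b by ring.
  by rewrite ger0_norm.
by rewrite subr0; case: (lerP 0 z) => hz; [rewrite ger0_norm | rewrite ltr0_norm]; lra.
Qed.

Lemma soft_neq0 (b z : R) : 0 <= b -> (soft b z != 0) = (b < `|z|).
Proof.
move=> b_ge0; rewrite /soft.
case: (lerP 0 z) => hz; [rewrite ger0_norm // | rewrite ltr0_norm //].
  case: ltP => h1; first lra.
  case: ltP => h2; last by rewrite eqxx.
  by apply/negP => /eqP; lra.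
case: ltP => h1.
  by rewrite (_ : b < - z); [apply/negP => /eqP; lra | lra].
case: ltP => h2; first lra.
by rewrite eqxx; apply/esym/negbTE; rewrite -leNgt; lra.
Qed.

Lemma patch_l2inf_le_support (N m n len : nat) (V G : 'cV[R]_len) (B : R) :
  0 <= B -> (forall i, G i 0 != 0 -> `|V i 0| <= B) ->
  (forall i, G i 0 = 0 -> V i 0 = 0) ->
  patch_l2inf N m n V <= Num.sqrt ((patch_l0inf N m n G)%:R) * B.
Proof.
move=> B_ge0 V_le V_supp.
have cv_at_sqr_le idx :
    cv_at V idx ^+ 2 <= (cv_at G idx != 0 : nat)%:R * B ^+ 2.
  rewrite /cv_at; case: insubP => [i _ _ | _]; last by rewrite expr0n eqxx mul0r.
  have [G0 | Gi] := eqVneq (G i 0) 0; first by rewrite V_supp // expr0n mul0r.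
  by rewrite mul1r -real_normK ?num_real // lerXn2r ?nnegrE ?V_le.
apply: bigmax_le => [|j _]; first by rewrite mulr_ge0 ?sqrtr_ge0.
set cnt := (\sum_(t < n) \sum_(r < m) (patch_entry N m G j t r != 0%R : nat))%N.
have sum_le : \sum_(t < n) \sum_(r < m) patch_entry N m V j t r ^+ 2
    <= cnt%:R * B ^+ 2.
  rewrite /cnt natr_sum mulr_suml; apply: ler_sum => t _.
  by rewrite natr_sum mulr_suml; apply: ler_sum => r _; exact: cv_at_sqr_le.
apply: le_trans (_ : Num.sqrt (cnt%:R * B ^+ 2) <= _).
  by rewrite ler_sqrt // mulr_ge0 ?ler0n ?sqr_ge0.
rewrite sqrtrM ?ler0n // sqrtr_sqr ger0_norm //; apply: ler_wpM2r => //.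
by rewrite ler_sqrt ?ler0n // ler_nat; exact: (@leq_bigmax_cond _ _ _ j).
Qed.

End RealClosedField.

Section ConvolutionalDictionary.
Context {R : rcfType}.
Context {N m n0 : nat} {f : 'M[R]_(m, n0)}.
Hypothesis n0_gt0 : (0 < n0)%N.
Hypothesis n0_le : (n0 <= N)%N.
Let D := conv_dict N f.
Hypothesis D_unit : forall i : 'I_(N * m), \sum_(p < N) (D p i) ^+ 2 = 1.

Lemma conv_dictE (p : 'I_N) (i : 'I_(N * m)) :
  D p i = if ((p + N - i %/ m) %% N < n0)%N
          then mx_at f (i %% m) ((p + N - i %/ m) %% N) else 0.
Proof. by rewrite mxE. Qed.

Lemma atom_shift_lt (i : 'I_(N * m)) : (0 < N)%N /\ (i %/ m < N)%N.
Proof.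
have : (0 < N * m)%N by apply: leq_ltn_trans (ltn_ord i).
by rewrite muln_gt0 => /andP[N_gt0 m_gt0]; rewrite ltn_divLR.
Qed.

(* Reindex a sum over all positions by the offset u = p - k (mod N) inside the
   window of length n0 starting at k. *)
Lemma sum_window (N_gt0 : (0 < N)%N) {k : nat} (kN : (k < N)%N) (F : 'I_N -> R) :
  (forall p : 'I_N, ~~ ((p + N - k) %% N < n0)%N -> F p = 0) ->
  \sum_(p < N) F p
    = \sum_(u < n0) F (Ordinal (ltn_pmod (k + widen_ord n0_le u) N_gt0)).
Proof.
move=> F_out.
rewrite (reindex_inj (h := fun u : 'I_N => Ordinal (ltn_pmod (k + u) N_gt0))).
  rewrite (bigID (fun u : 'I_N => (u < n0)%N)) /= [X in _ + X]big1 ?addr0.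
    by rewrite big_ord_narrow.
  by move=> u u_out; apply: F_out; rewrite /= cyclic_addK.
move=> u v /(f_equal (@nat_of_ord N)) /= /eqP.
by rewrite eqn_modDl !modn_small // => /eqP; exact: val_inj.
Qed.

Context {E : 'cV[R]_N} {eps0 : R}.
Hypothesis E_le : patch_l2inf N 1 n0 E <= eps0.

Lemma atom_noise_le (i : 'I_(N * m)) : `|(D^T *m E) i 0| <= eps0.
Proof.
have [N_gt0 kN] := atom_shift_lt i.
set k := (i %/ m)%N in kN.
have D_out (p : 'I_N) : ~~ ((p + N - k) %% N < n0)%N -> D p i = 0.
  by move=> p_out; rewrite conv_dictE (negbTE p_out).
rewrite mxE (sum_window N_gt0 kN); last by move=> p /D_out D0; rewrite mxE D0 mul0r.
set rot := fun u : 'I_n0 => Ordinal (ltn_pmod (k + widen_ord n0_le u) N_gt0).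
have atom_unit : \sum_(u < n0) D (rot u) i ^+ 2 = 1.
  by rewrite -(D_unit i) (sum_window N_gt0 kN) // => p /D_out ->; rewrite expr0n.
have CS : `|\sum_(u < n0) D (rot u) i * E (rot u) 0|
          <= Num.sqrt (\sum_(u < n0) E (rot u) 0 ^+ 2).
  rewrite -sqrtr_sqr ler_sqrt ?sqr_sum_mul_le_unit //.
  by apply: sumr_ge0 => u _; exact: sqr_ge0.
under eq_bigr do rewrite mxE.
apply: le_trans CS _; apply: le_trans E_le.
apply: le_trans (le_bigmax_cond _ _ (j := Ordinal kN) isT).
rewrite /= ler_sqrt; last first.
  by apply: sumr_ge0 => t _; apply: sumr_ge0 => r _; exact: sqr_ge0.
rewrite le_eqVlt; apply/orP; left; apply/eqP/eq_bigr => t _.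
by rewrite big_ord1 /patch_entry muln1 addn0 -cv_atE.
Qed.

Lemma gram_out_stripe (i j : 'I_(N * m)) :
  ~~ in_stripe N n0 (j %/ m) (i %/ m) -> (D^T *m D) i j = 0.
Proof.
move=> ij_far; rewrite mxE big1 // => p _; rewrite mxE !conv_dictE.
have [_ iN] := atom_shift_lt i; have [_ jN] := atom_shift_lt j.
case: ifP => pi; case: ifP => pj; rewrite ?mul0r ?mulr0 //.
by move: ij_far; rewrite (in_stripe_common_window iN jN (ltn_ord p) pi pj).
Qed.

Lemma gram_diag (i : 'I_(N * m)) : (D^T *m D) i i = 1.
Proof. by rewrite mxE -(D_unit i); apply: eq_bigr => p _; rewrite mxE expr2. Qed.

Lemma gram_le_coherence (i j : 'I_(N * m)) :
  j != i -> `|(D^T *m D) i j| <= coherence D.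
Proof.
move=> ji; apply: le_trans (le_bigmax_cond _ _ (j := i) isT).
exact: (le_bigmax_cond _ _ (j := j) ji).
Qed.

Lemma coherence_ge0 : 0 <= coherence D.
Proof. exact: bigmax_ge_id. Qed.

Context {G : 'cV[R]_(N * m)}.

Let mu := coherence D.
Let s := (stripe_l0inf N m n0 G)%:R : R.
Let gmax := absmax G.
Let estimate := D^T *m (D *m G + E).

Definition stripe_support (i : 'I_(N * m)) :=
  [set j : 'I_(N * m) | (G j ord0 != 0) && in_stripe N n0 (j %/ m) (i %/ m)].

Lemma interference_le (i : 'I_(N * m)) :
  `|\sum_(j | j != i) (D^T *m D) i j * G j 0|
    <= #|stripe_support i :\ i|%:R * (mu * gmax).
Proof.
apply: le_trans (ler_norm_sum _ _ _) _.
apply: (@le_trans _ _ (\sum_(j | j != i)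
   (if j \in stripe_support i then mu * gmax else 0))).
  apply: ler_sum => j ji; rewrite normrM inE.
  have [-> | Gj] /= := eqVneq (G j 0) 0; first by rewrite normr0 mulr0.
  case: ifP => ij_near; last by rewrite gram_out_stripe ?ij_near // normr0 mul0r.
  by apply: ler_pM => //; [exact: gram_le_coherence | exact: absmax_ge].
rewrite -big_mkcondr /= mulr_natl -sumr_const.
by rewrite (eq_bigl (fun j => j \in stripe_support i :\ i)) // => j; rewrite in_setD1.
Qed.

Lemma card_stripe_support (i : 'I_(N * m)) :
  (#|stripe_support i :\ i| + (G i ord0 != 0%R) <= stripe_l0inf N m n0 G)%N.
Proof.
have [_ iN] := atom_shift_lt i.
have -> : (#|stripe_support i :\ i| + (G i ord0 != 0%R) = #|stripe_support i|)%N.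
  rewrite (cardsD1 i (stripe_support i)) addnC; congr (_ + _)%N.
  by rewrite inE in_stripe_refl ?andbT.
exact: (@leq_bigmax_cond _ _ _ (Ordinal iN)).
Qed.

Lemma estimate_error (i : 'I_(N * m)) :
  `|estimate i 0 - G i 0| <= (s - (G i 0 != 0)%:R) * (mu * gmax) + eps0.
Proof.
rewrite /estimate mulmxDr mulmxA mxE [(D^T *m D *m G) i 0]mxE.
rewrite (bigD1 i) //= gram_diag mul1r.
set interf := \sum_(j | _) _; set noise := (_ *m E) i 0.
have -> : G i 0 + interf + noise - G i 0 = interf + noise by ring.
apply: le_trans (ler_normD _ _) _; apply: lerD; last exact: atom_noise_le.
apply: le_trans (interference_le i) _; apply: ler_wpM2r.
  by rewrite mulr_ge0 ?coherence_ge0 ?absmax_ge0.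
by rewrite lerBrDr -natrD ler_nat card_stripe_support.
Qed.

Lemma estimate_error_on {i : 'I_(N * m)} :
  G i 0 != 0 -> `|estimate i 0 - G i 0| <= (s - 1) * mu * gmax + eps0.
Proof. by move=> Gi; have := estimate_error i; rewrite Gi mulrA. Qed.

Lemma estimate_error_off {i : 'I_(N * m)} :
  G i 0 = 0 -> `|estimate i 0| <= s * mu * gmax + eps0.
Proof.
by move=> Gi; have := estimate_error i; rewrite Gi eqxx subr0 subr0 mulrA.
Qed.

Context {beta1 : R}.
Hypothesis beta_lt_on : absmin G - (s - 1) * mu * gmax - eps0 > beta1.
Hypothesis beta_gt_off : beta1 > s * mu * gmax + eps0.
Let estimate_hat := map_mx (soft beta1) estimate.

Lemma threshold_ge0 : 0 <= beta1.
Proof.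
apply: le_trans (ltW beta_gt_off); apply: addr_ge0.
  by rewrite !mulr_ge0 ?ler0n ?coherence_ge0 ?absmax_ge0.
by apply: le_trans E_le; exact: bigmax_ge_id.
Qed.

Lemma thresholded_support (i : 'I_(N * m)) :
  (estimate_hat i 0 != 0) = (G i 0 != 0).
Proof.
rewrite mxE soft_neq0 ?threshold_ge0 //.
have [G0 | Gi] := eqVneq (G i 0) 0.
  apply/negbTE; rewrite -leNgt.
  exact: le_trans (estimate_error_off G0) (ltW beta_gt_off).
have := lerB_dist (G i 0) (estimate i 0); rewrite distrC.
by have := estimate_error_on Gi; have := absmin_le G i Gi; have := beta_lt_on; lra.
Qed.

Lemma thresholded_error_on {i : 'I_(N * m)} : G i 0 != 0 ->
  `|(G - estimate_hat) i 0| <= eps0 + mu * (s - 1) * gmax + beta1.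
Proof.
move=> Gi; have -> : (G - estimate_hat) i 0 = G i 0 - soft beta1 (estimate i 0).
  by rewrite !mxE.
set t := estimate i 0.
have -> : G i 0 - soft beta1 t = (t - soft beta1 t) - (t - G i 0) by ring.
apply: le_trans (ler_normB _ _) _.
by have := soft_dist beta1 t threshold_ge0; have := estimate_error_on Gi; lra.
Qed.

Lemma thresholded_error_off {i : 'I_(N * m)} : G i 0 = 0 -> (G - estimate_hat) i 0 = 0.
Proof.
move=> G0; have := thresholded_support i; rewrite G0 eqxx => /negbFE/eqP hat0.
have -> : (G - estimate_hat) i 0 = G i 0 - estimate_hat i 0 by rewrite !mxE.
by rewrite G0 hat0 subr0.
Qed.

Lemma thresholded_patch_error (n1 : nat) : G != 0 ->
  patch_l2inf N m n1 (G - estimate_hat)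
    <= Num.sqrt ((patch_l0inf N m n1 G)%:R) * (eps0 + mu * (s - 1) * gmax + beta1).
Proof.
case/cV0Pn=> i0 Gi0; apply: patch_l2inf_le_support => [|i|i].
- exact: le_trans (normr_ge0 _) (thresholded_error_on Gi0).
- exact: thresholded_error_on.
- exact: thresholded_error_off.
Qed.

End ConvolutionalDictionary.

Theorem lemma2 (R : rcfType) (N m1 n0 n1 : nat)
  (f : 'M[R]_(m1, n0)) (G1 : 'cV[R]_(N * m1)) (X Y E : 'cV[R]_N)
  (eps0 beta1 : R) :
  (0 < n0)%N -> (n0 <= N)%N ->
  let D1 := conv_dict N f in
  (forall i : 'I_(N * m1), \sum_(p < N) (D1 p i) ^+ 2 = 1) ->
  X = D1 *m G1 -> G1 != 0 ->
  Y = X + E -> patch_l2inf N 1 n0 E <= eps0 ->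
  let mu := coherence D1 in
  let s := (stripe_l0inf N m1 n0 G1)%:R : R in
  let gmin := absmin G1 in
  let gmax := absmax G1 in
  let G1hat := map_mx (soft beta1) (D1^T *m Y) in
  s < 2^-1 * (1 + mu^-1 * (gmin / gmax)) - mu^-1 * (eps0 / gmax) ->
  gmin - (s - 1) * mu * gmax - eps0 > beta1 ->
  beta1 > s * mu * gmax + eps0 ->
  (forall i : 'I_(N * m1), (G1hat i 0 != 0) = (G1 i 0 != 0)) /\
  patch_l2inf N m1 n1 (G1 - G1hat)
    <= Num.sqrt ((patch_l0inf N m1 n1 G1)%:R) * (eps0 + mu * (s - 1) * gmax + beta1).
Proof.
move=> n0_gt0 n0_le D1 D1_unit -> G1_neq0 -> E_le mu s gmin gmax G1hat _
  beta_lt_on beta_gt_off.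
have support_eq := thresholded_support n0_gt0 n0_le D1_unit E_le beta_lt_on beta_gt_off.
have patch_error_le := thresholded_patch_error n0_gt0 n0_le D1_unit E_le beta_lt_on beta_gt_off.
by split; [exact: support_eq | exact: patch_error_le].
Qed.
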